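(* Let $\alpha\in[0,1)$ and let $G=(V,E)$ be a countable graph whose degrees are uniformly bounded by $\Delta$. Then there exists a non-vanishing equilibrium $\mu$ on $G$ with $\mu(e)\ge 2/\Delta^{1/(1-\alpha)}$ for all $e\in E$.
   Context: Edges are two-element subsets of $V$; $E_v=\{e\in E:v\in e\}$. A vector $\mu\in[0,\infty)^E$ is an equilibrium on $G$ if $\mu(e)=\sum_{v\in e}\mu(e)^\alpha/\sum_{e'\in E_v}\mu(e')^\alpha$ for every $e\in E$ with $\mu(e)>0$; it is non-vanishing if $\mu(e)>0$ for all $e\in E$. *)

From HB Require Import structures.
From mathcomp Require Import all_boot all_order all_algebra.
From mathcomp Require Import reals exp.
Set Implicit Arguments. Unset Strict Implicit. Unset Printing Implicit Defensive.
Import Order.TTheory GRing.Theory Num.Theory.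
Local Open Scope ring_scope.

(* The edge {u,v} is present iff
   v \in N u; E_v corresponds to the list N v (edge {v,w} for w in N v). *)
Definition simple_graph (V : eqType) (N : V -> seq V) : Prop :=
  (forall v, uniq (N v)) /\
  (forall u v, (u \in N v) = (v \in N u)) /\
  (forall v, v \notin N v).

Definition degree_bounded (V : eqType) (N : V -> seq V) (Delta : nat) : Prop :=
  forall v, (size (N v) <= Delta)%N.

(* A weight vector mu in [0,oo)^E, encoded as a function on ordered pairs
   that is symmetric on edges (so mu u v = mu({u,v})). *)
Definition edge_vector (R : realType) (V : eqType) (N : V -> seq V)
    (mu : V -> V -> R) : Prop :=
  forall u v, v \in N u -> mu u v = mu v u /\ 0 <= mu u v.

Definition equilibrium (R : realType) (alpha : R) (V : eqType)
    (N : V -> seq V) (mu : V -> V -> R) : Prop :=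
  edge_vector N mu /\
  forall u v, v \in N u -> 0 < mu u v ->
    mu u v = mu u v `^ alpha / (\sum_(w <- N u) mu u w `^ alpha)
           + mu u v `^ alpha / (\sum_(w <- N v) mu v w `^ alpha).

Definition non_vanishing (R : realType) (V : eqType) (N : V -> seq V)
    (mu : V -> V -> R) : Prop :=
  forall u v, v \in N u -> 0 < mu u v.

From HB Require Import structures.
From mathcomp Require Import all_boot all_order all_algebra.
From mathcomp Require Import reals exp.
From mathcomp Require Import all_classical all_reals all_analysis.
From mathcomp Require Import ring lra.
Set Implicit Arguments. Unset Strict Implicit. Unset Printing Implicit Defensive.
Import Order.TTheory GRing.Theory Num.Theory.
Import numFieldNormedType.Exports.
Local Open Scope classical_set_scope.
Local Open Scope ring_scope.

(** For [alpha = 0] the weights [1 / deg u + 1 / deg v] are an equilibrium.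
   For [0 < alpha < 1], clamp all weights into [[c, 2]] with
   [c = 2 / Delta ^ (1 / (1 - alpha))] and maximise, over the compact box
   [[c, 2] ^ (V * V)], the potential
   [Phi = sum_(v in Vs) ln (sum_(w in N v) mu(vw) ^ alpha) - alpha sum_(e in Es) mu(e)]
   for a finite set [Es] of edges with endpoints [Vs].  In one coordinate
   [t = mu(uv)], [Phi] is [ln (A_u + t ^ alpha) + ln (A_v + t ^ alpha) - alpha t]
   up to a constant, where [A_u] sums [mu ^ alpha] over the other edges at [u];
   concavity of [t ^ alpha] shows that this is strictly
   maximised at any root of the equilibrium equation
   [t = t ^ alpha / (A_u + t ^ alpha) + t ^ alpha / (A_v + t ^ alpha)],
   and the degree bound puts such a root in [[c, 2]].  So a maximiser solves
   the equations of the chosen edges; the solution sets being closed in the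
   box, compactness solves all edges at once. *)

Section real_lemmas.
Variable R : realType.

Lemma ln_lt_subr1 (y : R) : 0 < y -> y != 1 -> ln y < y - 1.
Proof.
move=> y_gt0 y_neq1; have := @expR_gt1Dx R (ln y).
by rewrite lnK ?posrE // ln_eq0 // => /(_ y_neq1); lra.
Qed.

Lemma ln_addr_sub_lt (A a b : R) : 0 <= A -> 0 < a -> 0 < b -> a != b ->
  ln (A + a) - ln (A + b) < (a - b) / (A + b).
Proof.
move=> A_ge0 a_gt0 b_gt0 a_neq_b.
have Aa_gt0 : 0 < A + a by rewrite ltr_wpDl.
have Ab_gt0 : 0 < A + b by rewrite ltr_wpDl.
have -> : (a - b) / (A + b) = (A + a) / (A + b) - 1 by field; rewrite gt_eqF.
rewrite -ln_div ?posrE //; apply: ln_lt_subr1; first by rewrite divr_gt0.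
by apply: contraNneq a_neq_b => /divr1_eq/addrI ->.
Qed.

Lemma powR_le_affine (a x : R) : 0 < a -> a < 1 -> 0 <= x ->
  x `^ a <= a * x + (1 - a).
Proof.
move=> a_gt0 a_lt1 x_ge0.
have := @conjugate_powR R (x `^ a) 1 a^-1 (1 - a)^-1 (powR_ge0 _ _) ler01.
rewrite !invr_gt0 a_gt0 subr_gt0 a_lt1 !invrK mulr1 -powRrM mulfV ?gt_eqF //.
by rewrite powRr1 // powR1 mul1r mulrC; apply; ring.
Qed.

Lemma powR_sub_le_tangent (a t r : R) : 0 < a -> a < 1 -> 0 < t -> 0 < r ->
  t `^ a - r `^ a <= a * r `^ a * (t / r - 1).
Proof.
move=> a_gt0 a_lt1 t_gt0 r_gt0.
have tr_gt0 : 0 < t / r by rewrite divr_gt0.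
rewrite -{1}(divfK (lt0r_neq0 r_gt0) t) powRM ?(ltW tr_gt0) ?(ltW r_gt0) //.
have := powR_le_affine a_gt0 a_lt1 (ltW tr_gt0).
have := powR_gt0 a r_gt0.
set b := r `^ a; set z := t / r; nra.
Qed.

Lemma continuous_powR (a x : R) : 0 < x -> {for x, continuous (fun y : R => y `^ a)}.
Proof.
move=> x_gt0; apply: differentiable_continuous; apply/derivable1_diffP.
by apply: derivable_powR; rewrite in_itv /= x_gt0.
Qed.

Lemma continuous_sum (T : topologicalType) (I : eqType) (s : seq I)
    (F : I -> T -> R) (x : T) :
  (forall i, i \in s -> {for x, continuous (F i)}) ->
  {for x, continuous (fun y => \sum_(i <- s) F i y)}.
Proof.
elim: s => [_|i s IHs Fc].
  under [X in {for x, continuous X}]eq_fun do rewrite big_nil; exact: cst_continuous.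
under [X in {for x, continuous X}]eq_fun do rewrite big_cons.
apply: continuousD; first by apply: Fc; rewrite mem_head.
by apply: IHs => j js; apply: Fc; rewrite in_cons js orbT.
Qed.

End real_lemmas.

Section edge_equation.
Variables (R : realType) (alpha : R) (Delta : nat).
Hypotheses (alpha_gt0 : 0 < alpha) (alpha_lt1 : alpha < 1)
  (Delta_gt0 : (0 < Delta)%N).

Definition min_weight : R := 2 / Delta%:R `^ (1 - alpha)^-1.

Definition clamp (t : R) : R := Num.max min_weight (Num.min 2 t).

Lemma Delta_powR_ge1 : 1 <= Delta%:R `^ (1 - alpha)^-1 :> R.
Proof.
have := @ler_powR R Delta%:R _ 0 (1 - alpha)^-1; rewrite powRr0 ler1n; apply => //.
by rewrite invr_ge0 subr_ge0 ltW.
Qed.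

Lemma min_weight_gt0 : 0 < min_weight.
Proof. by rewrite divr_gt0 // (lt_le_trans ltr01 Delta_powR_ge1). Qed.

Lemma min_weight_le2 : min_weight <= 2.
Proof.
rewrite ler_pdivrMr ?(lt_le_trans ltr01 Delta_powR_ge1) //.
by rewrite ler_peMr // Delta_powR_ge1.
Qed.

Lemma min_weight_powR :
  min_weight * (Delta%:R * 2 `^ alpha) = 2 * min_weight `^ alpha.
Proof.
have D_ge0 : 0 <= Delta%:R :> R by rewrite ler0n.
have b_gt0 : 0 < (1 - alpha)^-1 by rewrite invr_gt0 subr_gt0.
have inv_powR x : (Delta%:R `^ x)^-1 `^ alpha = (Delta%:R `^ (x * alpha))^-1.
  by rewrite -powRN -powRrM mulNr powRN.
rewrite /min_weight powRM ?invr_ge0 ?powR_ge0 // inv_powR.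
rewrite -{1}(mulr_powRB1 D_ge0 b_gt0) (_ : _ - 1 = (1 - alpha)^-1 * alpha).
  by field; rewrite !gt_eqF ?powR_gt0 ?ltr0n.
by field; rewrite subr_eq0 gt_eqF.
Qed.

Lemma clamp_ge t : min_weight <= clamp t.
Proof. by rewrite le_max lexx. Qed.

Lemma clamp_le2 t : clamp t <= 2.
Proof. by rewrite ge_max min_weight_le2 ge_min lexx. Qed.

Lemma clamp_gt0 t : 0 < clamp t.
Proof. exact: lt_le_trans min_weight_gt0 (clamp_ge t). Qed.

Lemma clamp_id t : min_weight <= t <= 2 -> clamp t = t.
Proof. by case/andP=> t_ge t_le2; rewrite /clamp (min_idPr t_le2) (max_idPr t_ge). Qed.

Lemma continuous_clamp : continuous clamp.
Proof.
apply: (@max_fun_continuous _ R R (fun=> min_weight)); first exact: cst_continuous.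
by apply: (@min_fun_continuous _ R R (fun=> 2)); [exact: cst_continuous | move=> t; exact: cvg_id].
Qed.

Variables (Au Av : R).
Hypotheses (Au_ge0 : 0 <= Au) (Av_ge0 : 0 <= Av).

Definition edge_defect (t : R) : R :=
  t - t `^ alpha / (Au + t `^ alpha) - t `^ alpha / (Av + t `^ alpha).

Definition edge_potential (t : R) : R :=
  ln (Au + t `^ alpha) + ln (Av + t `^ alpha) - alpha * t.

Lemma continuous_edge_defect t : 0 < t -> {for t, continuous edge_defect}.
Proof.
move=> t_gt0; have ta_gt0 := powR_gt0 alpha t_gt0.
have ct := @continuous_powR R alpha t t_gt0.
have cfrac A : 0 <= A ->
    {for t, continuous (fun s : R => s `^ alpha / (A + s `^ alpha))}.
  move=> A_ge0; apply: continuousM => //; apply: continuousV.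
    by rewrite gt_eqF // ltr_wpDl.
  by apply: continuousD => //; exact: cst_continuous.
apply: continuousB; last exact: cfrac.
by apply: continuousB; [exact: cvg_id | exact: cfrac].
Qed.

Hypotheses (Au_le : Au + 2 `^ alpha <= Delta%:R * 2 `^ alpha)
  (Av_le : Av + 2 `^ alpha <= Delta%:R * 2 `^ alpha).

Lemma edge_defect_root : exists2 r, min_weight <= r <= 2 & edge_defect r = 0.
Proof.
have c_gt0 := min_weight_gt0; have c_le2 := min_weight_le2.
have p2_gt0 : 0 < 2 `^ alpha :> R by apply: powR_gt0.
have defect2 : 0 <= edge_defect 2.
  have frac_le1 A : 0 <= A -> 2 `^ alpha / (A + 2 `^ alpha) <= 1.
    by move=> A_ge0; rewrite ler_pdivrMr ?mul1r ?ltr_wpDl // lerDr.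
  have := frac_le1 _ Au_ge0; have := frac_le1 _ Av_ge0; rewrite /edge_defect; lra.
(* [min_weight_powR] is exactly what makes [c ^ alpha / (A + c ^ alpha) >= c / 2]
   as soon as [A + 2 ^ alpha <= Delta * 2 ^ alpha]. *)
have defect_c : edge_defect min_weight <= 0.
  set a := min_weight `^ alpha; set K := Delta%:R * 2 `^ alpha.
  have a_gt0 : 0 < a by apply: powR_gt0.
  have K_gt0 : 0 < K by rewrite mulr_gt0 // ltr0n.
  have a_le : a <= 2 `^ alpha.
    by rewrite ge0_ler_powR ?nnegrE ?(ltW c_gt0) ?ler0n ?(ltW alpha_gt0).
  have c_eq : min_weight = 2 * a / K by rewrite -min_weight_powR mulfK ?gt_eqF.
  have frac_ge A : 0 <= A -> A + 2 `^ alpha <= K -> a / K <= a / (A + a).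
    move=> A_ge0 AK; rewrite ler_wpM2l ?(ltW a_gt0) // lef_pV2 ?posrE ?ltr_wpDl //.
    lra.
  have := frac_ge _ Au_ge0 Au_le; have := frac_ge _ Av_ge0 Av_le.
  rewrite /edge_defect -/a {1}c_eq; lra.
have [||r] := @IVT R edge_defect min_weight 2 0 c_le2; last first.
- by rewrite in_itv /= => r_in r_root; exists r.
- by rewrite ge_min defect_c le_max defect2 orbT.
apply: continuous_in_subspaceT => t; rewrite inE /= in_itv /= => /andP[t_ge _].
exact: continuous_edge_defect (lt_le_trans c_gt0 t_ge).
Qed.

Lemma edge_potential_lt_root t r : 0 < t -> 0 < r -> t != r -> edge_defect r = 0 ->
  edge_potential t < edge_potential r.
Proof.
move=> t_gt0 r_gt0 t_neq_r r_root.
set a := t `^ alpha; set b := r `^ alpha.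
have a_gt0 : 0 < a by apply: powR_gt0.
have b_gt0 : 0 < b by apply: powR_gt0.
have a_neq_b : a != b.
  apply: contraNneq t_neq_r => ab; apply/eqP.
  by apply: (powR_injective alpha_gt0) ab; rewrite nnegrE ltW.
have lnu := ln_addr_sub_lt Au_ge0 a_gt0 b_gt0 a_neq_b.
have lnv := ln_addr_sub_lt Av_ge0 a_gt0 b_gt0 a_neq_b.
have tangent := powR_sub_le_tangent alpha_gt0 alpha_lt1 t_gt0 r_gt0.
set W := (Au + b)^-1 + (Av + b)^-1.
have W_gt0 : 0 < W by rewrite addr_gt0 // invr_gt0 ltr_wpDl.
have r_eq : r = b * W.
  by apply/eqP; rewrite -subr_eq0 -r_root /edge_defect -/b /W; apply/eqP; ring.
have tangentW : alpha * b * (t / r - 1) * W = alpha * (t - r).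
  transitivity (alpha * (t / r - 1) * (b * W)); first by ring.
  by rewrite -r_eq; field; rewrite gt_eqF.
have gain : (a - b) * W <= alpha * (t - r).
  by rewrite -tangentW ler_wpM2r // ltW.
rewrite /edge_potential -/a -/b.
have : (a - b) / (Au + b) + (a - b) / (Av + b) = (a - b) * W by rewrite /W; ring.
lra.
Qed.

Lemma edge_defect_argmax t0 : min_weight <= t0 <= 2 ->
    (forall t, min_weight <= t <= 2 -> edge_potential t <= edge_potential t0) ->
  edge_defect t0 = 0.
Proof.
move=> t0_in t0_max; have [r r_in r_root] := edge_defect_root.
have [-> //|t0_neq_r] := eqVneq t0 r.
have pos t : min_weight <= t <= 2 -> 0 < t.
  by case/andP=> t_ge _; exact: lt_le_trans min_weight_gt0 t_ge.
have := edge_potential_lt_root (pos _ t0_in) (pos _ r_in) t0_neq_r r_root.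
by rewrite ltNge t0_max.
Qed.

End edge_equation.

(* [compact_In0] is stated for pointed spaces. *)
HB.instance Definition _ (I : Type) (R : realType) :=
  isPointed.Build {ptws I -> R} (fun _ => 0).

Section graph.
Variables (R : realType) (alpha : R) (V : countType) (N : V -> seq V) (Delta : nat).
Hypotheses (alpha_gt0 : 0 < alpha) (alpha_lt1 : alpha < 1)
  (Delta_gt0 : (0 < Delta)%N)
  (N_simple : simple_graph N) (N_bounded : degree_bounded N Delta).

Local Notation c := (min_weight alpha Delta).
Local Notation clamp := (clamp alpha Delta).

Lemma adj_sym u v : (u \in N v) = (v \in N u).
Proof. by case: N_simple => _ []. Qed.

Lemma adj_uniq u : uniq (N u).
Proof. by case: N_simple. Qed.

Lemma adj_neq u v : v \in N u -> u != v.
Proof. by case: N_simple => _ [_ loopfree]; apply: contraTneq => <-. Qed.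

(* A weight vector is a point [x] of the product space [V * V -> R]: the edge
   [{u, v}] reads the coordinate [edge_key u v] through [clamp], so weights
   stay in [[c, 2]] and depend continuously on [x]. *)
Definition edge_key (u v : V) : V * V :=
  if (pickle u <= pickle v)%N then (u, v) else (v, u).

Lemma edge_key_sym u v : edge_key u v = edge_key v u.
Proof.
rewrite /edge_key; case: leqP => uv; case: leqP => vu //.
  by congr (_, _); apply: (pcan_inj pickleK); apply/eqP; rewrite eqn_leq uv vu.
by have := ltn_trans uv vu; rewrite ltnn.
Qed.

Lemma edge_key_eq a b u v :
  edge_key a b = edge_key u v -> (a = u /\ b = v) \/ (a = v /\ b = u).
Proof. by rewrite /edge_key; case: leqP => _; case: leqP => _ [-> ->]; tauto. Qed.

Local Notation update x q t := (@eqtype.dfwith (V * V)%type (fun=> R) x q t).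

Definition weight (x : V * V -> R) u v := clamp (x (edge_key u v)).

Definition load x u := \sum_(w <- N u) weight x u w `^ alpha.

Definition load_without x u v := \sum_(w <- N u | w != v) weight x u w `^ alpha.

Lemma weight_sym x u v : weight x u v = weight x v u.
Proof. by rewrite /weight edge_key_sym. Qed.

Lemma weight_gt0 x u v : 0 < weight x u v.
Proof. exact: clamp_gt0. Qed.

Lemma weight_le2 x u v : weight x u v <= 2.
Proof. exact: clamp_le2. Qed.

Lemma load_without_ge0 x u v : 0 <= load_without x u v.
Proof. by apply: sumr_ge0 => w _; apply: powR_ge0. Qed.

Lemma load_gt0 x u : N u != [::] -> 0 < load x u.
Proof.
rewrite /load; case: (N u) => [|w s] // _.
rewrite big_cons ltr_pwDl ?powR_gt0 ?weight_gt0 //.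
by apply: sumr_ge0 => z _; apply: powR_ge0.
Qed.

Lemma load_le x u : load x u <= Delta%:R * 2 `^ alpha.
Proof.
apply: (@le_trans _ _ (\sum_(w <- N u) 2 `^ alpha)).
  apply: ler_sum => w _; apply: ge0_ler_powR; rewrite ?nnegrE ?weight_le2 //.
    exact: ltW.
  exact: ltW (weight_gt0 _ _ _).
rewrite big_const_seq count_predT iter_addr_0 mulr_natl.
exact: ler_wpMn2l (powR_ge0 _ _) _ _ (N_bounded u).
Qed.

Lemma load_split x u v :
  v \in N u -> load x u = load_without x u v + weight x u v `^ alpha.
Proof. by move=> vN; rewrite /load (bigD1_seq v) ?adj_uniq // addrC. Qed.

Lemma load_without_update (x : V * V -> R) u v t :
  load_without (update x (edge_key u v) t) u v = load_without x u v.
Proof.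
apply: eq_bigr => w w_neq_v; rewrite /weight dfwith_out //.
by apply/eqP => /edge_key_eq [[_ vw]|[uw vu]]; move: w_neq_v; rewrite -?vw -?uw ?vu eqxx.
Qed.

Lemma load_update x u v t : v \in N u ->
  load (update x (edge_key u v) t) u = load_without x u v + clamp t `^ alpha.
Proof. by move=> vN; rewrite (load_split _ vN) load_without_update /weight dfwith_in. Qed.

Lemma load_update_other x q t w : (forall z, edge_key w z != q) ->
  load (update x q t) w = load x w.
Proof. by move=> w_off_q; apply: eq_bigr => z _; rewrite /weight dfwith_out // eq_sym. Qed.

Lemma load_without_le x u v : v \in N u ->
  load_without x u v + 2 `^ alpha <= Delta%:R * 2 `^ alpha.
Proof.
move=> vN; have := load_le (update x (edge_key u v) 2) u.
by rewrite load_update // clamp_id // min_weight_le2 // lexx.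
Qed.

Definition equilibrium_defect x u v :=
  weight x u v - weight x u v `^ alpha / load x u - weight x u v `^ alpha / load x v.

Lemma equilibrium_defectE x u v : v \in N u ->
  equilibrium_defect x u v =
  edge_defect alpha (load_without x u v) (load_without x v u) (weight x u v).
Proof.
move=> vN; have uN : u \in N v by rewrite adj_sym.
by rewrite /equilibrium_defect (load_split _ vN) (load_split _ uN) [weight x v u]weight_sym.
Qed.

Local Notation X := {ptws (V * V) -> R}.

Lemma continuous_clamp_coord q (x : X) : {for x, continuous (fun y : X => clamp (y q))}.
Proof.
have proj_q : {for x, continuous (fun y : X => y q)}.
  exact: (@proj_continuous _ (fun=> R) q).
by apply: (continuous_comp proj_q); exact: continuous_clamp.
Qed.

Lemma continuous_weight_powR u v (x : X) :
  {for x, continuous (fun y : X => weight y u v `^ alpha)}.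
Proof.
exact: continuous_comp (@continuous_clamp_coord (edge_key u v) x)
  (continuous_powR (weight_gt0 x u v)).
Qed.

Lemma continuous_load u (x : X) : {for x, continuous (fun y : X => load y u)}.
Proof. by apply: continuous_sum => w _; apply: continuous_weight_powR. Qed.

Lemma continuous_equilibrium_defect u v (x : X) : v \in N u ->
  {for x, continuous (fun y : X => equilibrium_defect y u v)}.
Proof.
move=> vN; have uN : u \in N v by rewrite adj_sym.
have cw : {for x, continuous (fun y : X => weight y u v)}.
  exact: continuous_clamp_coord.
have cfrac w : N w != [::] ->
    {for x, continuous (fun y : X => weight y u v `^ alpha / load y w)}.
  move=> Nw; apply: continuousM; first exact: continuous_weight_powR.
  by apply: continuousV; [rewrite gt_eqF ?load_gt0 | exact: continuous_load].
apply: continuousB; last by apply: cfrac; case: (N v) uN.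
by apply: continuousB => //; apply: cfrac; case: (N u) vN.
Qed.

Definition box : set X := [set x | forall q : V * V, (`[c, 2]%classic : set R) (x q)].

Lemma compact_box : compact box.
Proof.
apply: (@tychonoff _ (fun _ : V * V => R) (fun=> `[c, 2]%classic)) => q.
exact: segment_compact.
Qed.

Definition potential (Es : seq (V * V)) (Vs : seq V) (x : X) : R :=
  \sum_(w <- Vs) ln (load x w) - alpha * \sum_(q <- Es) clamp (x q).

Lemma continuous_potential Es Vs : (forall w, w \in Vs -> N w != [::]) ->
  continuous (potential Es Vs).
Proof.
move=> Vs_nonisolated x.
have cV : {for x, continuous (fun y : X => \sum_(w <- Vs) ln (load y w))}.
  apply: continuous_sum => w w_in; apply: continuous_comp; first exact: continuous_load.
  exact: continuous_ln (load_gt0 _ (Vs_nonisolated _ w_in)).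
have cE : {for x, continuous (fun y : X => \sum_(q <- Es) clamp (y q))}.
  by apply: continuous_sum => q _; exact: continuous_clamp_coord.
exact: continuousB cV (continuousM (@cst_continuous _ _ alpha x) cE).
Qed.

Lemma potential_update Es Vs (x : X) u v : uniq Es -> uniq Vs -> v \in N u ->
    edge_key u v \in Es -> u \in Vs -> v \in Vs ->
  exists K, forall t, potential Es Vs (update x (edge_key u v) t) =
    edge_potential alpha (load_without x u v) (load_without x v u) (clamp t) + K.
Proof.
move=> Es_uniq Vs_uniq vN q_in u_in v_in; set q := edge_key u v.
have uN : u \in N v by rewrite adj_sym.
have v_in' : v \in rem u Vs by rewrite mem_rem_uniq // inE eq_sym adj_neq.
exists (\sum_(w <- rem v (rem u Vs)) ln (load x w)
        - alpha * \sum_(p <- rem q Es) clamp (x p)) => t.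
rewrite /potential (big_rem u) //= (big_rem v) //= (big_rem q) //=.
have rest_V : \sum_(w <- rem v (rem u Vs)) ln (load (update x q t) w) =
              \sum_(w <- rem v (rem u Vs)) ln (load x w).
  apply: eq_big_seq => w; rewrite mem_rem_uniq ?rem_uniq // inE mem_rem_uniq //.
  rewrite inE => /and3P[w_neq_v w_neq_u _]; congr ln; apply: load_update_other => z.
  by apply/eqP => /edge_key_eq [[wu _]|[wv _]]; [move: w_neq_u | move: w_neq_v];
    rewrite ?wu ?wv eqxx.
have rest_E : \sum_(p <- rem q Es) clamp (update x q t p) =
              \sum_(p <- rem q Es) clamp (x p).
  apply: eq_big_seq => p; rewrite mem_rem_uniq // inE => /andP[p_neq_q _].
  by rewrite dfwith_out // eq_sym.
rewrite rest_V rest_E load_update // /q edge_key_sym load_update // dfwith_in.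
by rewrite /edge_potential; ring.
Qed.

Lemma potential_argmax_equilibrium Es Vs (xs : X) u v :
    uniq Es -> uniq Vs -> v \in N u ->
    edge_key u v \in Es -> u \in Vs -> v \in Vs -> box xs ->
    (forall y, box y -> potential Es Vs y <= potential Es Vs xs) ->
  equilibrium_defect xs u v = 0.
Proof.
move=> Es_uniq Vs_uniq vN q_in u_in v_in xs_box xs_max.
have uN : u \in N v by rewrite adj_sym.
set q := edge_key u v.
have in_box t : `[c, 2]%classic t -> c <= t <= 2 by rewrite /= in_itv.
have xs_q := in_box _ (xs_box q).
have xs_eq : update xs q (xs q) = xs.
  apply: funext => p; have [<-|q_neq_p] := eqVneq q p; first exact: dfwith_in.
  exact: dfwith_out.
have [K potentialE] := potential_update xs Es_uniq Vs_uniq vN q_in u_in v_in.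
rewrite equilibrium_defectE // /weight -/q clamp_id //.
apply: (edge_defect_argmax (Delta := Delta));
  rewrite ?load_without_ge0 ?load_without_le //.
move=> t t_in.
have pot_xs : potential Es Vs xs =
    edge_potential alpha (load_without xs u v) (load_without xs v u) (xs q) + K.
  by rewrite -{1}xs_eq potentialE clamp_id.
have : potential Es Vs (update xs q t) <= potential Es Vs xs.
  apply: xs_max => p; have [<-|q_neq_p] := eqVneq q p.
    by rewrite dfwith_in /= in_itv.
  by rewrite dfwith_out //; exact: xs_box.
by rewrite pot_xs potentialE lerD2r clamp_id.
Qed.

Lemma finite_equilibrium (s : seq (V * V)) : (forall p, p \in s -> p.2 \in N p.1) ->
  exists2 x : X, box x & forall p, p \in s -> equilibrium_defect x p.1 p.2 = 0.
Proof.
move=> s_edges.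
set Es := undup [seq edge_key p.1 p.2 | p <- s].
set Vs := undup (flatten [seq [:: p.1; p.2] | p <- s]).
have Vs_ends p : p \in s -> p.1 \in Vs /\ p.2 \in Vs.
  by move=> ps; rewrite !mem_undup; split; apply/flatten_mapP; exists p; rewrite ?inE ?eqxx ?orbT.
have Vs_nonisolated w : w \in Vs -> N w != [::].
  rewrite mem_undup => /flatten_mapP[p /s_edges p_edge].
  rewrite !inE => /orP[]/eqP->; first by case: (N p.1) p_edge.
  by rewrite -adj_sym in p_edge; case: (N p.2) p_edge.
have box0 : box !=set0.
  by exists (fun=> 2) => q; rewrite /= in_itv /= min_weight_le2 // lexx.
have [xs xs_box xs_max] := compact_EVT_max box0 compact_box
  (continuous_subspaceT (continuous_potential (Es := Es) Vs_nonisolated)).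
rewrite inE in xs_box; exists xs => // -[u v] uv_in.
have [u_in v_in] := Vs_ends _ uv_in.
apply: (potential_argmax_equilibrium (Es := Es) (Vs := Vs));
  rewrite ?undup_uniq //=.
- exact: s_edges uv_in.
- by rewrite mem_undup; apply/mapP; exists (u, v).
- by move=> y y_box; apply: xs_max; rewrite inE.
Qed.

Lemma equilibrium_exists_pos : exists mu : V -> V -> R,
  equilibrium alpha N mu /\ non_vanishing N mu /\
  (forall u v, v \in N u -> c <= mu u v).
Proof.
pose edges := [set p : V * V | p.2 \in N p.1].
pose solved p := (fun x : X => equilibrium_defect x p.1 p.2) @^-1` [set 0].
have [x x_solves] : \bigcap_(p in edges) (box `&` solved p) !=set0.
  move: compact_box; rewrite compact_In0; apply.
    exists solved => // p p_edge; apply: preimage_closed; last exact: closed_eq.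
    by move=> x _; apply: continuous_equilibrium_defect.
  move=> D D_edges.
  have [x x_box x_solves] := @finite_equilibrium (finmap.enum_fset D)
    (fun p pD => set_mem (D_edges p pD)).
  by exists x => p pD; split => //; exact: x_solves.
exists (weight x); split; [split|split].
- by move=> u v _; split; [exact: weight_sym | exact: ltW (weight_gt0 _ _ _)].
- move=> u v vN _; have [_ /= defect0] := x_solves (u, v) vN.
  apply/eqP; rewrite -subr_eq0; apply/eqP.
  by rewrite -[RHS]defect0 /equilibrium_defect /load /=; ring.
- by move=> u v _; exact: weight_gt0.
- by move=> u v _; exact: clamp_ge.
Qed.

End graph.

Lemma equilibrium_exists_alpha0 (R : realType) (V : eqType) (N : V -> seq V)
    (Delta : nat) :
  simple_graph N -> degree_bounded N Delta ->
  exists mu : V -> V -> R, equilibrium 0 N mu /\ non_vanishing N mu /\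
    (forall u v, v \in N u -> 2 / Delta%:R <= mu u v).
Proof.
move=> [_ [adj_sym _]] N_bounded.
have deg_gt0 u v : v \in N u -> 0 < (size (N u))%:R :> R.
  by rewrite ltr0n; case: (N u).
have inv_deg_ge u v : v \in N u -> Delta%:R^-1 <= (size (N u))%:R^-1 :> R.
  move=> vN; rewrite lef_pV2 ?posrE ?ler_nat ?(deg_gt0 u v) //.
  by rewrite (lt_le_trans (deg_gt0 u v vN)) // ler_nat.
have sum_powR0 (s : seq V) (f : V -> R) : \sum_(w <- s) f w `^ 0 = (size s)%:R.
  rewrite (eq_bigr (fun=> 1)) => [|w _]; last exact: powRr0.
  by rewrite big_const_seq count_predT iter_addr_0.
exists (fun u v => (size (N u))%:R^-1 + (size (N v))%:R^-1); split; [split|split].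
- move=> u v _; split; first exact: addrC.
  by rewrite addr_ge0 // invr_ge0 ler0n.
- move=> u v _ _.
  by rewrite !sum_powR0 !powRr0 !div1r.
- move=> u v vN; have uN : u \in N v by rewrite adj_sym.
  by rewrite addr_gt0 // invr_gt0; [exact: deg_gt0 vN | exact: deg_gt0 uN].
- move=> u v vN; have uN : u \in N v by rewrite adj_sym.
  have := inv_deg_ge _ _ vN; have := inv_deg_ge _ _ uN; rewrite mulrC; lra.
Qed.

Theorem mainTheorem2 (R : realType) (alpha : R) (V : countType)
    (N : V -> seq V) (Delta : nat) :
  0 <= alpha -> alpha < 1 ->
  simple_graph N -> degree_bounded N Delta ->
  exists mu : V -> V -> R,
    equilibrium alpha N mu /\ non_vanishing N mu /\
    (forall u v, v \in N u ->
       2 / (Delta%:R `^ (1 - alpha)^-1) <= mu u v).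
Proof.
move=> alpha_ge0 alpha_lt1 N_simple N_bounded.
have [Delta0|Delta_gt0] := posnP Delta.
  have no_edge u v : v \in N u = false.
    by have := N_bounded u; rewrite Delta0 leqn0 size_eq0 => /eqP ->.
  by exists (fun _ _ => 1); split; [split|split] => u v; rewrite no_edge.
have [<-|alpha_neq0] := eqVneq 0 alpha.
  have [mu [mu_eq [mu_pos mu_ge]]] := equilibrium_exists_alpha0 R N_simple N_bounded.
  exists mu; do 2!split => //.
  by move=> u v vN; rewrite subr0 invr1 powRr1 ?ler0n // mu_ge.
by apply: equilibrium_exists_pos; rewrite // lt_neqAle alpha_neq0.
Qed.
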